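(* Fix a round $r\ge 0$ and a block $k\in\{0,1,\dots,K\}$ of the algorithm described in the context, and let $w_{\max}=\max_{0\le t\le \tau_k^r-1} w_k^{r,t}$. Suppose Assumptions (A1)–(A3) hold. If $$\eta_k^r \le \frac{1}{2\,\tau_k^r\, L_k\, w_{\max}},$$ then, almost surely, $$\sum_{t=0}^{\tau_k^r-1} w_k^{r,t}\,\mathbb{E}^r\big[\|g_k^{r,t}-g_k^{r,0}\|^2\big] \le 8(\tau_k^r)^3(\eta_k^r)^2L_k^2\,w_{\max}^3\Big(\|\nabla_k F(\Theta^{r,0})\|^2+\sigma_k^2\Big)$$ and $$\sum_{t=0}^{\tau_k^r-1} (w_k^{r,t})^2\,\mathbb{E}^r\big[\|g_k^{r,t}-g_k^{r,0}\|^2\big] \le 8(\tau_k^r)^3(\eta_k^r)^2L_k^2\,w_{\max}^4\Big(\|\nabla_k F(\Theta^{r,0})\|^2+\sigma_k^2\Big).$$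
   Context: Setting. There are blocks $k=0,1,\dots,K$ (block $0$ is the server, blocks $1,\dots,K$ are parties). The global parameter is $\Theta=(\theta_0,\theta_1,\dots,\theta_K)\in\mathbb{R}^V$ with $\theta_k\in\mathbb{R}^{V_k}$, $V=\sum_k V_k$. There are $N$ data samples; for each $i\in\{1,\dots,N\}$ there is a differentiable loss $l_i:\mathbb{R}^V\to\mathbb{R}$ (in the application $l_i(\Theta)=l_i(\theta_0;h_1(\theta_1;x_1^i),\dots,h_K(\theta_K;x_K^i);y^i)$, but only the function of $\Theta$ matters). The objective is $F(\Theta)=\frac1N\sum_{i=1}^N l_i(\Theta)$, and $\nabla_kF$ denotes the partial gradient of $F$ with respect to the block $\theta_k$. For a mini-batch $\mathcal{B}\subseteq\{1,\dots,N\}$, the stochastic partial gradient is $g_k(\Theta;\mathcal{B})=\frac{1}{|\mathcal{B}|}\sum_{i\in\mathcal{B}}\nabla_{\theta_k}l_i(\Theta)$. Assumptions. (A1) Smoothness: there are constants $L<\infty$ and $L_k<\infty$ ($k=0,\dots,K$) such that for all $i$ and all $\Theta_1,\Theta_2\in\mathbb{R}^V$: $\|\nabla_\Theta l_i(\Theta_1)-\nabla_\Theta l_i(\Theta_2)\|\le L\|\Theta_1-\Theta_2\|$ and $\|\nabla_{\theta_k} l_i(\Theta_1)-\nabla_{\theta_k} l_i(\Theta_2)\|\le L_k\|\Theta_1-\Theta_2\|$. (A2) Unbiasedness: for a random mini-batch $\mathcal{B}$ (drawn as in the algorithm) and every fixed $\Theta$, $\mathbb{E}_{\mathcal{B}}[g_k(\Theta;\mathcal{B})]=\nabla_kF(\Theta)$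 for all $k$. (A3) Bounded variance: there are constants $\sigma_k<\infty$ such that for every fixed $\Theta$, $\mathbb{E}_{\mathcal{B}}\|\nabla_kF(\Theta)-g_k(\Theta;\mathcal{B})\|^2\le\sigma_k^2$. Algorithm (Flex-VFL). Given deterministic positive integers $\tau_k^r\ge1$ (number of local iterations of block $k$ in round $r$), step sizes $\eta_k^r>0$, and weights $w_k^{r,t}\ge 1$, and an initial $\Theta^{0,0}$. In each round $r=0,1,\dots$, a mini-batch $\mathcal{B}^r$ is drawn at random, independently of $\mathcal{B}^0,\dots,\mathcal{B}^{r-1}$ (so that (A2), (A3) hold for $\mathcal{B}^r$ conditionally on the past). Write $\Theta^{r,0}=(\theta_0^{r,0},\dots,\theta_K^{r,0})$. For each block $k$ and $t=0,\dots,\tau_k^r-1$: let $\Gamma_k^{r,t}\in\mathbb{R}^V$ be the vector whose block $k$ equals $\theta_k^{r,t}$ and whose block $j\neq k$ equals $\theta_j^{r,0}$; set $g_k^{r,t}=g_k(\Gamma_k^{r,t};\mathcal{B}^r)$ and $\theta_k^{r,t+1}=\theta_k^{r,t}-\eta_k^r\,w_k^{r,t}\,g_k^{r,t}$. Then $\Theta^{r+1,0}=(\theta_0^{r,\tau_0^r},\dots,\theta_K^{r,\tau_K^r})$. In particular $g_k^{r,0}=g_k(\Theta^{r,0};\mathcal{B}^r)$ and $\theta_k^{r,\tau_k^r}=\theta_k^{r,0}-\eta_k^r\sum_{t=0}^{\tau_k^r-1}w_k^{r,t}g_k^{r,t}$. Notation. $\mathbb{E}^r[\cdot]$ denotes expectation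 over the mini-batch $\mathcal{B}^r$ conditioned on $\Theta^{0,0},\Theta^{1,0},\dots,\Theta^{r,0}$. *)

From HB Require Import structures.
From mathcomp Require Import all_boot all_order all_algebra.
From mathcomp Require Import all_classical all_reals all_analysis.
Set Implicit Arguments. Unset Strict Implicit. Unset Printing Implicit Defensive.
Import Order.TTheory GRing.Theory Num.Theory.
Import numFieldNormedType.Exports.
Local Open Scope ring_scope.

(* Parameter vectors Theta live in R^n, represented as row vectors 'rV[R]_n.
   The coordinates are partitioned into K+1 blocks by blk : 'I_n -> 'I_K.+1
   (coordinate j belongs to block blk j). *)

Definition enorm (R : realType) (n : nat) (v : 'rV[R]_n) : R :=
  Num.sqrt (\sum_(j < n) v 0 j ^+ 2).

Definition grad (R : realType) (n : nat) (f : 'rV[R]_n -> R) (x : 'rV[R]_n)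
  : 'rV[R]_n := \row_(j < n) ('D_(delta_mx 0 j) f x).

Definition blockpart (R : realType) (n K : nat) (blk : 'I_n -> 'I_K.+1)
  (k : 'I_K.+1) (v : 'rV[R]_n) : 'rV[R]_n :=
  \row_(j < n) (if blk j == k then v 0 j else 0).

Definition pgrad (R : realType) (n K : nat) (blk : 'I_n -> 'I_K.+1)
  (k : 'I_K.+1) (f : 'rV[R]_n -> R) (x : 'rV[R]_n) : 'rV[R]_n :=
  blockpart blk k (grad f x).

Definition objF (R : realType) (n N : nat) (l : 'I_N -> 'rV[R]_n -> R)
  (x : 'rV[R]_n) : R := N%:R^-1 * \sum_(i < N) l i x.

Definition sgrad (R : realType) (n K N : nat) (blk : 'I_n -> 'I_K.+1)
  (k : 'I_K.+1) (l : 'I_N -> 'rV[R]_n -> R) (x : 'rV[R]_n) (B : {set 'I_N})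
  : 'rV[R]_n := #|B|%:R^-1 *: \sum_(i in B) pgrad blk k (l i) x.

(* Expectation over a random mini-batch with probability mass function p. *)
Definition Eb (R : realType) (N : nat) (p : {set 'I_N} -> R)
  (f : {set 'I_N} -> R) : R := \sum_(B : {set 'I_N}) p B * f B.

Definition Ebv (R : realType) (n N : nat) (p : {set 'I_N} -> R)
  (f : {set 'I_N} -> 'rV[R]_n) : 'rV[R]_n := \sum_(B : {set 'I_N}) p B *: f B.

(* Local iterates of block k within a round, for mini-batch B:
   Gamma t has block k equal to theta_k^{r,t} and every other block equal to
   theta_j^{r,0} (blocks j <> k are never changed by the update below). *)
Fixpoint Gam (R : realType) (n K N : nat) (blk : 'I_n -> 'I_K.+1)
  (k : 'I_K.+1) (l : 'I_N -> 'rV[R]_n -> R) (eta : R) (w : nat -> R)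
  (Theta0 : 'rV[R]_n) (B : {set 'I_N}) (t : nat) : 'rV[R]_n :=
  match t with
  | 0 => Theta0
  | t'.+1 => let G := Gam blk k l eta w Theta0 B t' in
             G - (eta * w t') *: sgrad blk k l G B
  end.

Definition wmax (R : realType) (tau : nat) (w : nat -> R) : R :=
  \big[Num.max/0]_(t < tau) w t.

From HB Require Import structures.
From mathcomp Require Import all_boot all_order all_algebra.
From mathcomp Require Import all_classical all_reals all_analysis.
From mathcomp Require Import ring lra.
Set Implicit Arguments. Unset Strict Implicit. Unset Printing Implicit Defensive.
Import Order.TTheory GRing.Theory Num.Theory.
Import numFieldNormedType.Exports.
Local Open Scope ring_scope.

(* Fix a mini-batch B and write g for the stochastic partial gradient at B and
   c = L_k eta w_max.  Since g is L_k-Lipschitz and the local iterate has moved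
   by at most eta w_max (sum_{s<t} ||g(Gamma_s)||), the drift
   a_t = ||g(Gamma_t) - g(Gamma_0)|| satisfies a_t <= c sum_{s<t} (||g(Gamma_0)|| + a_s);
   under 2 tau c <= 1 this recursion gives a_t <= 2 c tau ||g(Gamma_0)||.
   Squaring, using ||g(Gamma_0)||^2 <= 2 ||nabla_k F||^2 + 2 ||nabla_k F - g(Gamma_0)||^2
   and taking the expectation over B with (A3) bounds every drift term by
   8 c^2 tau^2 (||nabla_k F||^2 + sigma_k^2); summing over t < tau with weights
   w_t <= w_max gives both inequalities. *)

Section EuclideanNorm.
Variables (R : realType) (n : nat).
Implicit Types (u v : 'rV[R]_n) (a : R).

Definition sqnorm u := \sum_(j < n) u 0 j ^+ 2.
Definition dotv u v := \sum_(j < n) u 0 j * v 0 j.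

Lemma sqnorm_ge0 u : 0 <= sqnorm u.
Proof. by apply: sumr_ge0 => j _; rewrite sqr_ge0. Qed.

Lemma enorm_ge0 u : 0 <= enorm u.
Proof. exact: sqrtr_ge0. Qed.

Lemma enormE u : enorm u = Num.sqrt (sqnorm u).
Proof. by []. Qed.

Lemma sqr_enorm u : enorm u ^+ 2 = sqnorm u.
Proof. by rewrite sqr_sqrtr // sqnorm_ge0. Qed.

(* Lagrange's identity: twice the gap is sum_(i,j) (u_i v_j - u_j v_i)^2. *)
Lemma sqr_dotv_le u v : dotv u v ^+ 2 <= sqnorm u * sqnorm v.
Proof.
set a := fun j => u 0 j; set b := fun j => v 0 j.
have gap_ge0 : 0 <= \sum_(i < n) \sum_(j < n) (a i * b j - a j * b i) ^+ 2.
  by apply: sumr_ge0 => i _; apply: sumr_ge0 => j _; rewrite sqr_ge0.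
have prodE : sqnorm u * sqnorm v = \sum_(i < n) \sum_(j < n) a i ^+ 2 * b j ^+ 2.
  by rewrite mulr_suml; apply: eq_bigr => i _; rewrite mulr_sumr.
have prodE' : sqnorm u * sqnorm v = \sum_(i < n) \sum_(j < n) a j ^+ 2 * b i ^+ 2.
  rewrite mulrC mulr_suml; apply: eq_bigr => i _; rewrite mulr_sumr.
  by apply: eq_bigr => j _; rewrite mulrC.
have dotE : dotv u v ^+ 2 = \sum_(i < n) \sum_(j < n) (a i * b i) * (a j * b j).
  by rewrite expr2 mulr_suml; apply: eq_bigr => i _; rewrite mulr_sumr.
have gapE : \sum_(i < n) \sum_(j < n) (a i * b j - a j * b i) ^+ 2 =
    sqnorm u * sqnorm v + sqnorm u * sqnorm v - 2 * dotv u v ^+ 2.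
  rewrite {1}prodE {1}prodE' dotE -big_split /= mulr_sumr -sumrB.
  apply: eq_bigr => i _; rewrite -big_split /= mulr_sumr -sumrB.
  by apply: eq_bigr => j _; ring.
by move: gap_ge0; rewrite gapE; lra.
Qed.

Lemma dotv_le u v : dotv u v <= enorm u * enorm v.
Proof.
have sqr_le : dotv u v ^+ 2 <= (enorm u * enorm v) ^+ 2.
  by rewrite exprMn !sqr_enorm sqr_dotv_le.
apply: le_trans (ler_norm _) _.
by rewrite -ler_sqr ?nnegrE ?mulr_ge0 ?enorm_ge0 // real_normK ?num_real.
Qed.

Lemma sqnormD u v : sqnorm (u + v) = sqnorm u + 2 * dotv u v + sqnorm v.
Proof.
rewrite /sqnorm /dotv mulr_sumr -!big_split /=.
by apply: eq_bigr => j _; rewrite !mxE; ring.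
Qed.

Lemma enormD u v : enorm (u + v) <= enorm u + enorm v.
Proof.
rewrite -ler_sqr ?nnegrE ?addr_ge0 ?enorm_ge0 // sqr_enorm sqnormD sqrrD.
by rewrite !sqr_enorm; have := dotv_le u v; lra.
Qed.

Lemma enormZ a u : enorm (a *: u) = `|a| * enorm u.
Proof.
rewrite !enormE; have -> : sqnorm (a *: u) = a ^+ 2 * sqnorm u.
  by rewrite /sqnorm mulr_sumr; apply: eq_bigr => j _; rewrite !mxE; ring.
by rewrite sqrtrM ?sqr_ge0 // sqrtr_sqr.
Qed.

Lemma enormN u : enorm (- u) = enorm u.
Proof. by rewrite -scaleN1r enormZ normrN normr1 mul1r. Qed.

Lemma enorm0 : enorm (0 : 'rV[R]_n) = 0.
Proof. by rewrite -(scale0r 0) enormZ normr0 mul0r. Qed.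

Lemma enorm_sum (I : finType) (P : pred I) (f : I -> 'rV[R]_n) :
  enorm (\sum_(i | P i) f i) <= \sum_(i | P i) enorm (f i).
Proof.
elim/big_rec2: _ => [|i x y _ le_xy]; first by rewrite enorm0.
by rewrite (le_trans (enormD _ _)) // lerD2l.
Qed.

Lemma sqr_enormD_le u v :
  enorm (u + v) ^+ 2 <= 2 * enorm u ^+ 2 + 2 * enorm v ^+ 2.
Proof.
have := enormD u v; have := enorm_ge0 (u + v).
have := sqr_ge0 (enorm u - enorm v); nra.
Qed.

End EuclideanNorm.

Section MiniBatchExpectation.
Variables (R : realType) (N : nat) (p : {set 'I_N} -> R).
Hypothesis p_ge0 : forall B, 0 <= p B.
Hypothesis p_sum1 : \sum_(B : {set 'I_N}) p B = 1.

Lemma ler_Eb f g : (forall B, f B <= g B) -> Eb p f <= Eb p g.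
Proof. by move=> le_fg; apply: ler_sum => B _; rewrite ler_wpM2l. Qed.

Lemma Eb_affine a b f : Eb p (fun B => a + b * f B) = a + b * Eb p f.
Proof.
rewrite /Eb mulr_sumr -[a in RHS]mulr1 -p_sum1 mulr_sumr -big_split /=.
by apply: eq_bigr => B _; ring.
Qed.

End MiniBatchExpectation.

Lemma wmax_ge (R : realType) tau (w : nat -> R) t :
  (t < tau)%N -> w t <= wmax tau w.
Proof. by move=> lt_t_tau; rewrite /wmax (bigD1 (Ordinal lt_t_tau)) //= le_max lexx. Qed.

Lemma wmax_ge0 (R : realType) tau (w : nat -> R) : 0 <= wmax tau w.
Proof. by rewrite /wmax; elim/big_rec: _ => // i x _ x_ge0; rewrite le_max x_ge0 orbT. Qed.

(* A discrete Gronwall bound, linear in t thanks to the smallness of c. *)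
Lemma le_linear_of_rec (R : realDomainType) (a : nat -> R) (c G : R) (tau : nat) :
  0 <= c -> 0 <= G -> 2 * tau%:R * c <= 1 ->
  (forall t, (t <= tau)%N -> a t <= c * \sum_(s < t) (G + a s)) ->
  forall t, (t <= tau)%N -> a t <= 2 * c * t%:R * G.
Proof.
move=> c_ge0 G_ge0 small_c rec_a; elim/ltn_ind => t IH le_t_tau.
have sum_le : \sum_(s < t) (G + a s) <= t%:R * (G + 2 * c * t%:R * G).
  have -> : t%:R * (G + 2 * c * t%:R * G) = \sum_(s < t) (G + 2 * c * t%:R * G).
    by rewrite sumr_const card_ord mulr_natl.
  apply: ler_sum => s _; rewrite lerD2l.
  apply: le_trans (IH s (ltn_ord s) (ltnW (leq_trans (ltn_ord s) le_t_tau))) _.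
  by rewrite ler_wpM2r // ler_wpM2l ?mulr_ge0 // ler_nat ltnW.
have small_ct : 2 * c * t%:R <= 1.
  by apply: le_trans small_c; rewrite mulrAC ler_wpM2r // ler_wpM2l // ler_nat.
have ctG_ge0 : 0 <= c * t%:R * G by rewrite !mulr_ge0.
apply: le_trans (rec_a t le_t_tau) _; apply: le_trans (ler_wpM2l c_ge0 sum_le) _.
by have := ler_wpM2l ctG_ge0 small_ct; nra.
Qed.

Lemma sgrad_lipschitz (R : realType) (n K N : nat) (blk : 'I_n -> 'I_K.+1)
    (k : 'I_K.+1) (l : 'I_N -> 'rV[R]_n -> R) (M : R) (B : {set 'I_N}) :
  0 <= M ->
  (forall i x y, enorm (pgrad blk k (l i) x - pgrad blk k (l i) y) <= M * enorm (x - y)) ->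
  forall x y, enorm (sgrad blk k l x B - sgrad blk k l y B) <= M * enorm (x - y).
Proof.
move=> M_ge0 pgrad_lip x y; rewrite /sgrad -scalerBr -sumrB enormZ.
rewrite ger0_norm ?invr_ge0 ?ler0n //.
have [->|B_neq0] := eqVneq #|B| 0%N; first by rewrite invr0 mul0r mulr_ge0 ?enorm_ge0.
rewrite ler_pdivrMl ?ltr0n ?lt0n //; apply: le_trans (enorm_sum _ _) _.
have -> : #|B|%:R * (M * enorm (x - y)) = \sum_(i in B) M * enorm (x - y).
  by rewrite sumr_const mulr_natl.
by apply: ler_sum => i _; exact: pgrad_lip.
Qed.

Lemma sum_weighted_le (R : numDomainType) (tau m : nat) (w e : nat -> R) (W D : R) :
  0 <= D -> (forall t, (t < tau)%N -> 0 <= w t <= W) ->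
  (forall t, (t < tau)%N -> e t <= D) ->
  \sum_(t < tau) w t ^+ m * e t <= tau%:R * (W ^+ m * D).
Proof.
move=> D_ge0 w_bound e_le.
have -> : tau%:R * (W ^+ m * D) = \sum_(t < tau) W ^+ m * D.
  by rewrite sumr_const card_ord mulr_natl.
apply: ler_sum => t _; have /andP[wt_ge0 wt_le] := w_bound t (ltn_ord t).
apply: le_trans (ler_wpM2l (exprn_ge0 m wt_ge0) (e_le t (ltn_ord t))) _.
by rewrite ler_wpM2r // lerXn2r ?nnegrE // (le_trans wt_ge0).
Qed.

Section LocalDrift.
Variables (R : realType) (n K N : nat) (blk : 'I_n -> 'I_K.+1) (k : 'I_K.+1).
Variables (l : 'I_N -> 'rV[R]_n -> R) (eta : R) (w : nat -> R) (Theta0 : 'rV[R]_n).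

Local Notation Gamma B := (Gam blk k l eta w Theta0 B).
Local Notation g B x := (sgrad blk k l x B).

Lemma Gam_sum B t : Gamma B t = Theta0 - \sum_(s < t) (eta * w s) *: g B (Gamma B s).
Proof.
elim: t => [|t IH]; first by rewrite big_ord0 subr0.
by rewrite /= IH big_ord_recr /= opprD addrA -IH.
Qed.

Variables (M W : R) (tau : nat).
Hypotheses (M_ge0 : 0 <= M) (eta_ge0 : 0 <= eta) (W_ge0 : 0 <= W).
Hypothesis w_bound : forall t, (t < tau)%N -> 0 <= w t <= W.
Hypothesis g_lip : forall B x y, enorm (g B x - g B y) <= M * enorm (x - y).
Hypothesis small_step : 2 * tau%:R * (M * eta * W) <= 1.

Lemma sgrad_drift_le B t : (t <= tau)%N ->
  enorm (g B (Gamma B t) - g B Theta0) <= 2 * (M * eta * W) * tau%:R * enorm (g B Theta0).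
Proof.
move=> le_t_tau; set c := M * eta * W; set G := enorm (g B Theta0).
set a := fun t => enorm (g B (Gamma B t) - g B Theta0).
have c_ge0 : 0 <= c by rewrite !mulr_ge0.
have G_ge0 : 0 <= G by exact: enorm_ge0.
have g_le s : enorm (g B (Gamma B s)) <= G + a s.
  by rewrite -{1}(subrK (g B Theta0) (g B (Gamma B s))) addrC enormD.
have rec_a t' : (t' <= tau)%N -> a t' <= c * \sum_(s < t') (G + a s).
  move=> le_t'_tau; apply: le_trans (g_lip _ _ _) _.
  have -> : c * \sum_(s < t') (G + a s) = M * \sum_(s < t') eta * W * (G + a s).
    by rewrite -mulr_sumr /c -!mulrA.
  rewrite Gam_sum addrAC subrr add0r enormN.
  apply: ler_wpM2l => //; apply: le_trans (enorm_sum _ _) _.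
  apply: ler_sum => s _.
  have /andP[ws_ge0 ws_le] := w_bound (leq_trans (ltn_ord s) le_t'_tau).
  rewrite enormZ ger0_norm ?mulr_ge0 // -!mulrA.
  apply: ler_wpM2l => //; apply: (le_trans (ler_wpM2l ws_ge0 (g_le s))) => //.
  by rewrite ler_wpM2r ?addr_ge0 ?enorm_ge0.
apply: le_trans (le_linear_of_rec c_ge0 G_ge0 small_step rec_a le_t_tau) _.
by rewrite ler_wpM2r // ler_wpM2l ?mulr_ge0 // ler_nat.
Qed.

Variables (p : {set 'I_N} -> R) (sigma_k : R).
Hypotheses (p_ge0 : forall B, 0 <= p B) (p_sum1 : \sum_(B : {set 'I_N}) p B = 1).
Hypothesis variance_le :
  Eb p (fun B => enorm (pgrad blk k (objF l) Theta0 - g B Theta0) ^+ 2) <= sigma_k ^+ 2.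

Lemma Eb_sqr_sgrad_drift_le t : (t <= tau)%N ->
  Eb p (fun B => enorm (g B (Gamma B t) - g B Theta0) ^+ 2)
    <= 8 * (M * eta * W) ^+ 2 * tau%:R ^+ 2
         * (enorm (pgrad blk k (objF l) Theta0) ^+ 2 + sigma_k ^+ 2).
Proof.
move=> le_t_tau; set c := M * eta * W; set gF := pgrad blk k (objF l) Theta0.
set b := 8 * c ^+ 2 * tau%:R ^+ 2.
have b_ge0 : 0 <= b by rewrite !mulr_ge0 ?sqr_ge0.
have drift_le B : enorm (g B (Gamma B t) - g B Theta0) ^+ 2
    <= b * enorm gF ^+ 2 + b * enorm (gF - g B Theta0) ^+ 2.
  have g0E : g B Theta0 = gF + - (gF - g B Theta0) by rewrite opprB addrC subrK.
  have := sqr_enormD_le gF (- (gF - g B Theta0)); rewrite -g0E enormN => g0_le.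
  have drift_le := sgrad_drift_le B le_t_tau; rewrite -/c in drift_le.
  apply: le_trans (_ : (2 * c * tau%:R) ^+ 2 * enorm (g B Theta0) ^+ 2 <= _).
    rewrite -exprMn lerXn2r ?nnegrE ?enorm_ge0 //.
    exact: le_trans (enorm_ge0 _) drift_le.
  apply: le_trans (ler_wpM2l (sqr_ge0 _) g0_le) _.
  by rewrite /b le_eqVlt; apply/orP; left; apply/eqP; ring.
apply: le_trans (ler_Eb p_ge0 drift_le) _; rewrite Eb_affine //.
by rewrite mulrDr lerD2l ler_wpM2l.
Qed.

Lemma sum_weighted_Eb_drift_le m :
  \sum_(t < tau) w t ^+ m * Eb p (fun B => enorm (g B (Gamma B t) - g B Theta0) ^+ 2)
    <= 8 * tau%:R ^+ 3 * eta ^+ 2 * M ^+ 2 * W ^+ m.+2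
         * (enorm (pgrad blk k (objF l) Theta0) ^+ 2 + sigma_k ^+ 2).
Proof.
set C := _ + _; have C_ge0 : 0 <= C by rewrite addr_ge0 ?sqr_ge0.
have D_ge0 : 0 <= 8 * (M * eta * W) ^+ 2 * tau%:R ^+ 2 * C.
  by rewrite !(sqr_ge0, mulr_ge0) ?ler0n.
have drift_le t : (t < tau)%N -> Eb p (fun B => enorm (g B (Gamma B t) - g B Theta0) ^+ 2)
    <= 8 * (M * eta * W) ^+ 2 * tau%:R ^+ 2 * C.
  by move=> lt_t_tau; exact: Eb_sqr_sgrad_drift_le (ltnW lt_t_tau).
apply: le_trans (sum_weighted_le m D_ge0 w_bound drift_le) _.
by rewrite le_eqVlt; apply/orP; left; apply/eqP; rewrite !exprS; ring.
Qed.

End LocalDrift.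

Theorem lemma1 (R : realType) (n K N : nat) (blk : 'I_n -> 'I_K.+1)
  (l : 'I_N -> 'rV[R]_n -> R)
  (L : R) (Lb : 'I_K.+1 -> R) (sigma : 'I_K.+1 -> R)
  (p : {set 'I_N} -> R)
  (k : 'I_K.+1) (tau : nat) (eta : R) (w : nat -> R) (Theta0 : 'rV[R]_n) :
  (forall i x, differentiable (l i) x) ->
  (* (A1) smoothness *)
  (forall i x y, enorm (grad (l i) x - grad (l i) y) <= L * enorm (x - y)) ->
  (forall i j x y, enorm (pgrad blk j (l i) x - pgrad blk j (l i) y)
                   <= Lb j * enorm (x - y)) ->
  (forall B, 0 <= p B) -> \sum_(B : {set 'I_N}) p B = 1 ->
  (* (A2) unbiasedness *)
  (forall j x, Ebv p (fun B => sgrad blk j l x B) = pgrad blk j (objF l) x) ->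
  (* (A3) bounded variance *)
  (forall j x, Eb p (fun B => enorm (pgrad blk j (objF l) x - sgrad blk j l x B) ^+ 2)
               <= sigma j ^+ 2) ->
  (1 <= tau)%N -> 0 < eta -> (forall t, (t < tau)%N -> 1 <= w t) ->
  (* step-size condition eta <= 1 / (2 tau L_k w_max) *)
  2 * tau%:R * Lb k * wmax tau w * eta <= 1 ->
  let gdiff t B := enorm (sgrad blk k l (Gam blk k l eta w Theta0 B t) B
                          - sgrad blk k l Theta0 B) ^+ 2 in
  let C := enorm (pgrad blk k (objF l) Theta0) ^+ 2 + sigma k ^+ 2 in
  \sum_(t < tau) w t * Eb p (gdiff t)
    <= 8 * tau%:R ^+ 3 * eta ^+ 2 * Lb k ^+ 2 * wmax tau w ^+ 3 * C
  /\
  \sum_(t < tau) w t ^+ 2 * Eb p (gdiff t)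
    <= 8 * tau%:R ^+ 3 * eta ^+ 2 * Lb k ^+ 2 * wmax tau w ^+ 4 * C.
Proof.
move=> _ _ pgrad_lip p_ge0 p_sum1 _ variance_le _ eta_gt0 w_ge1 step_le gdiff C.
(* The drift recursion needs a nonnegative Lipschitz constant. *)
set M := Num.max (Lb k) 0; set W := wmax tau w.
have eta_ge0 := ltW eta_gt0; have W_ge0 : 0 <= W := wmax_ge0 tau w.
have M_ge0 : 0 <= M by rewrite le_max lexx orbT.
have sqrM_le : M ^+ 2 <= Lb k ^+ 2.
  by rewrite /M; case: (leP 0 (Lb k)) => _; rewrite ?expr0n ?sqr_ge0.
have small_step : 2 * tau%:R * (M * eta * W) <= 1.
  rewrite /M; case: (leP 0 (Lb k)) => _; last by rewrite !mul0r mulr0 ler01.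
  by apply: le_trans step_le; rewrite le_eqVlt; apply/orP; left; apply/eqP; rewrite /W; ring.
have w_bound t : (t < tau)%N -> 0 <= w t <= W.
  move=> lt_t_tau; apply/andP; split; last exact: wmax_ge.
  exact: le_trans ler01 (w_ge1 t lt_t_tau).
have pgrad_lipM i x y :
    enorm (pgrad blk k (l i) x - pgrad blk k (l i) y) <= M * enorm (x - y).
  by apply: le_trans (pgrad_lip i k x y) _; rewrite ler_wpM2r ?enorm_ge0 // le_max lexx.
have g_lip B := sgrad_lipschitz B M_ge0 pgrad_lipM.
have M_weighted_le m := sum_weighted_Eb_drift_le M_ge0 eta_ge0 W_ge0 w_bound g_lip
    small_step p_ge0 p_sum1 (variance_le k Theta0) m.
have weighted_le m : \sum_(t < tau) w t ^+ m * Eb p (gdiff t)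
    <= 8 * tau%:R ^+ 3 * eta ^+ 2 * Lb k ^+ 2 * W ^+ m.+2 * C.
  apply: le_trans (M_weighted_le m) _; rewrite -/C.
  by rewrite !ler_wpM2r ?exprn_ge0 ?addr_ge0 ?sqr_ge0 // ler_wpM2l ?mulr_ge0 ?ler0n ?exprn_ge0.
by split; [exact: weighted_le 1%N | exact: weighted_le 2%N].
Qed.
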